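(* Let $g\ge2$, $A\ge1$, $k\ge1$ and let $f_1(q),\dots,f_g(q)$ be power series with complex coefficients, each of order of magnitude $(A,k)$. Then the wronskian $W_{\mathbf f}(q)$ is a power series of order of magnitude $\left(g!\,A^g\,2^{\frac{g(g-1)(g+3k-2)}{6}},\ gk-1+\frac{g(g+1)}{2}\right)$.
   Context: A power series $h=\sum_{m\ge0}h_mq^m$ has order of magnitude $(A,n)$ ($A\ge1$ real, $n\ge1$ integer) if $|h_m|\le A(m+1)^n$ for all $m$. For $\mathbf f=(f_1,\dots,f_g)$ the wronskian is $W_{\mathbf f}(q)=\det\big(f_j^{(i)}(q)\big)_{0\le i\le g-1,\,1\le j\le g}$, where $f^{(i)}$ is the $i$-th derivative. *)

From HB Require Import structures.
From mathcomp Require Import all_boot all_order all_algebra.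
From mathcomp Require Import fingroup perm.
From mathcomp Require Import complex.
From mathcomp Require Import reals.
Set Implicit Arguments. Unset Strict Implicit. Unset Printing Implicit Defensive.
Import Order.TTheory GRing.Theory Num.Theory.
Local Open Scope ring_scope.

(* A formal power series sum_m h_m q^m is represented by its coefficient
   sequence h : nat -> R[i]. *)
Definition pseries (R : realType) := nat -> R[i].

Definition ps_mul (R : realType) (a b : pseries R) : pseries R :=
  fun m => \sum_(i < m.+1) a i * b (m - i)%N.

Definition ps_one (R : realType) : pseries R := fun m => if m == 0%N then 1 else 0.

Definition ps_deriv (R : realType) (a : pseries R) : pseries R :=
  fun m => (m.+1)%:R * a m.+1.

Definition ps_derivn (R : realType) (i : nat) (a : pseries R) : pseries R :=
  iter i (@ps_deriv R) a.

Definition ps_prod (R : realType) (g : nat) (F : 'I_g -> pseries R) : pseries R :=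
  foldr (fun i acc => ps_mul (F i) acc) (@ps_one R) (enum 'I_g).

(* Wronskian W_f = det (f_j^(i))_{0<=i<=g-1, 1<=j<=g}, expanded by the Leibniz
   formula  det M = sum_s sign(s) prod_i M i (s i), in the ring of power series. *)
Definition wronskian (R : realType) (g : nat) (f : 'I_g -> pseries R) : pseries R :=
  fun m => \sum_(s : 'S_g) (-1) ^+ s * ps_prod (fun i => ps_derivn i (f (s i))) m.

Definition order_of_magnitude (R : realType) (h : pseries R) (A : R) (n : nat) : Prop :=
  1 <= A /\ (1 <= n)%N /\ forall m : nat, ComplexField.Normc.normc (h m) <= A * (m.+1)%:R ^+ n.

From HB Require Import structures.
From mathcomp Require Import all_boot all_order all_algebra.
From mathcomp Require Import fingroup perm.
From mathcomp Require Import complex.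
From mathcomp Require Import reals.
From mathcomp Require Import zify ring.
Import Order.TTheory GRing.Theory Num.Theory.
Set Implicit Arguments. Unset Strict Implicit. Unset Printing Implicit Defensive.
Local Open Scope ring_scope.

(* Expand the wronskian by the Leibniz formula: each of its g! terms is, up
   to sign, a product of g power series whose i-th factor is an i-th
   derivative of some f_j.  Differentiating a series of order (C, n) gives
   one of order (2^n C, n + 1), since m + 2 <= 2 (m + 1); so the i-th factor
   has order (A 2^(i k + C(i,2)), k + i).  A Cauchy product of series of
   orders (C, n) and (C', n') has order (C C', n + n' + 1), because it has
   m + 1 terms.  Multiplying out, every Leibniz term has order
   (A^g 2^(k C(g,2) + C(g,3)), g k - 1 + C(g+1,2)), and the binomial
   coefficients are exactly the closed forms of the statement. *)

Lemma sum_bin_ord (n m : nat) : (\sum_(i < n) 'C(i, m) = 'C(n, m.+1))%N.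
Proof.
elim: n => [|n IHn]; first by rewrite big_ord0 bin0n.
by rewrite big_ord_recr /= IHn binS.
Qed.

Lemma sum_ord_addn (n k : nat) : (\sum_(i < n) (k + i) = n * k + 'C(n, 2))%N.
Proof.
by rewrite big_split /= sum_nat_const card_ord -(big_mkord xpredT id) bin2_sum.
Qed.

Lemma mul_bin2_add_bin3 (g k : nat) :
  (k * 'C(g, 2) + 'C(g, 3) = g * (g - 1) * (g + 3 * k - 2) %/ 6)%N.
Proof.
case: g => [|[|h]]; try by rewrite !bin_small // muln0.
have bin_ffact3 (n : nat) : ('C(n, 3) * 6 = n * n.-1 * n.-2)%N.
  by rewrite (bin_ffact n 3) !ffactnS ffactn0 muln1 mulnA.
have bin_ffact2 (n : nat) : ('C(n, 2) * 2 = n * n.-1)%N.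
  by rewrite (bin_ffact n 2) !ffactnS ffactn0 muln1.
rewrite (_ : _ * _ * _ = (k * 'C(h.+2, 2) + 'C(h.+2, 3)) * 6)%N ?mulnK //.
rewrite mulnDl bin_ffact3 (_ : 6 = 2 * 3)%N // mulnA -(mulnA k) bin_ffact2.
have -> : (h.+2 + 3 * k - 2 = h + 3 * k)%N by lia.
by rewrite subn1 /=; ring.
Qed.

Section CoefficientBounds.
Variable R : realType.
Local Notation normc := (@ComplexField.Normc.normc R).
Implicit Types (a b h : pseries R) (C : R).

Lemma normc_ge0 (x : R[i]) : 0 <= normc x.
Proof. by case: x => a b; exact: sqrtr_ge0. Qed.

Lemma normc_nat (n : nat) : normc n%:R = n%:R.
Proof. by rewrite normcMn ComplexField.Normc.normc1. Qed.

Lemma normc_signM (b : bool) (x : R[i]) : normc ((-1) ^+ b * x) = normc x.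
Proof. by case: b; rewrite ?mul1r // mulN1r normcN. Qed.

Lemma normc_sum (I : Type) (r : seq I) (P : pred I) (F : I -> R[i]) :
  normc (\sum_(i <- r | P i) F i) <= \sum_(i <- r | P i) normc (F i).
Proof.
elim/big_rec2: _ => [|i y1 y2 _ IH]; first by rewrite ComplexField.Normc.normc0.
by apply: le_trans (le_normcD _ _) _; rewrite lerD2l.
Qed.

Definition ps_bounded h C (n : nat) :=
  forall m : nat, normc (h m) <= C * m.+1%:R ^+ n.

Lemma ps_bounded_ge0 h C n : ps_bounded h C n -> 0 <= C.
Proof. by move=> /(_ 0%N); rewrite expr1n mulr1; exact: le_trans (normc_ge0 _). Qed.

Lemma ps_bounded_one : ps_bounded (@ps_one R) 1 0.
Proof.
move=> m; rewrite expr0 mulr1 /ps_one; case: eqP => _.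
  by rewrite ComplexField.Normc.normc1.
by rewrite ComplexField.Normc.normc0.
Qed.

Lemma ps_bounded_deriv h C n :
  ps_bounded h C n -> ps_bounded (@ps_deriv R h) (C * 2%:R ^+ n) n.+1.
Proof.
move=> hC m; have C_ge0 := ps_bounded_ge0 hC.
rewrite /ps_deriv ComplexField.Normc.normcM normc_nat.
rewrite (_ : _ * _ ^+ n.+1 = m.+1%:R * (C * (2%:R * m.+1%:R) ^+ n)); last first.
  by rewrite exprMn exprS; ring.
have le_succ2_double : m.+2%:R ^+ n <= (2%:R * m.+1%:R) ^+ n :> R.
  by rewrite -natrM lerXn2r ?nnegrE ?ler_nat //; lia.
apply: le_trans (ler_wpM2l (ler0n _ _) (hC m.+1)) _.
by rewrite ler_wpM2l ?ler_wpM2l.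
Qed.

Lemma ps_bounded_derivn h C n i : ps_bounded h C n ->
  ps_bounded (@ps_derivn R i h) (C * 2%:R ^+ (i * n + 'C(i, 2))) (n + i).
Proof.
move=> hC; elim: i => [|i IHi]; first by rewrite /ps_derivn /= mulr1 addn0.
rewrite /ps_derivn iterS -/(ps_derivn i h) addnS.
rewrite (_ : (i.+1 * n + 'C(i.+1, 2) = (i * n + 'C(i, 2)) + (n + i))%N); last first.
  by rewrite binS bin1; ring.
by rewrite exprD mulrA; exact: ps_bounded_deriv.
Qed.

Lemma ps_mul_one a m : ps_mul a (@ps_one R) m = a m.
Proof.
rewrite /ps_mul big_ord_recr /= subnn /ps_one eqxx mulr1 big1 ?add0r // => i _.
by rewrite subn_eq0 leqNgt ltn_ord mulr0.
Qed.

Lemma ps_bounded_mul a b Ca Cb na nb : ps_bounded a Ca na -> ps_bounded b Cb nb ->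
  ps_bounded (ps_mul a b) (Ca * Cb) (na + nb).+1.
Proof.
move=> hCa hCb m; have Ca_ge0 := ps_bounded_ge0 hCa; have Cb_ge0 := ps_bounded_ge0 hCb.
apply: le_trans (normc_sum _ _ _) _.
apply: (@le_trans _ _ (\sum_(i < m.+1) Ca * Cb * m.+1%:R ^+ (na + nb))); last first.
  by rewrite sumr_const card_ord -[_ *+ m.+1]mulr_natr exprSr mulrA.
apply: ler_sum => i _; rewrite ComplexField.Normc.normcM exprD mulrACA.
have lerX_succ (j : nat) (d : nat) : (j <= m)%N -> j.+1%:R ^+ d <= m.+1%:R ^+ d :> R.
  by move=> le_jm; rewrite lerXn2r ?nnegrE ?ler_nat.
apply: le_trans (ler_pM (normc_ge0 _) (normc_ge0 _) (hCa i) (hCb (m - i)%N)) _.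
by rewrite ler_pM ?mulr_ge0 ?exprn_ge0 // ler_wpM2l // lerX_succ ?leq_subr // -ltnS.
Qed.

Lemma ps_bounded_foldr (I : Type) (F : I -> pseries R) (C : I -> R) (n : I -> nat)
    (r : seq I) : (forall i, ps_bounded (F i) (C i) (n i)) ->
  ps_bounded (foldr (fun i acc => ps_mul (F i) acc) (@ps_one R) r)
    (\prod_(i <- r) C i) (\sum_(i <- r) (n i).+1).-1.
Proof.
move=> hF; elim: r => [|x [|y r] IHr]; first by rewrite !big_nil; exact: ps_bounded_one.
  by move=> m; rewrite /= ps_mul_one !big_seq1; exact: hF.
rewrite big_cons [in X in ps_bounded _ _ X]big_cons.
have -> : ((n x).+1 + \sum_(i <- y :: r) (n i).+1).-1 =
          (n x + (\sum_(i <- y :: r) (n i).+1).-1).+1 by rewrite big_cons !addSn addnS.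
exact: ps_bounded_mul.
Qed.

Lemma ps_bounded_prod (g : nat) (F : 'I_g -> pseries R) (C : 'I_g -> R)
    (n : 'I_g -> nat) : (forall i, ps_bounded (F i) (C i) (n i)) ->
  ps_bounded (ps_prod F) (\prod_(i < g) C i) (\sum_(i < g) (n i).+1).-1.
Proof. by move/(ps_bounded_foldr (enum 'I_g)); rewrite !big_enum. Qed.

Lemma ps_bounded_wronskian (g : nat) (f : 'I_g -> pseries R) A k :
    (forall j, ps_bounded (f j) A k) ->
  ps_bounded (wronskian f)
    (g`!%:R * A ^+ g * 2%:R ^+ (k * 'C(g, 2) + 'C(g, 3))) (g * k + 'C(g.+1, 2)).-1.
Proof.
move=> hf; set E := (k * 'C(g, 2) + 'C(g, 3))%N; set N := (g * k + 'C(g.+1, 2)).-1.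
have hterm (s : 'S_g) :
    ps_bounded (ps_prod (fun i => ps_derivn i (f (s i)))) (A ^+ g * 2%:R ^+ E) N.
  have sum_exponents : (\sum_(i < g) (i * k + 'C(i, 2)) = E)%N.
    rewrite big_split /= -big_distrl /= sum_bin_ord mulnC.
    by rewrite (eq_bigr (fun i : 'I_g => 'C(i, 1))) ?sum_bin_ord // => i _; rewrite bin1.
  have sum_degrees : (\sum_(i < g) (k + i).+1 = g * k + 'C(g.+1, 2))%N.
    transitivity (\sum_(i < g) (k.+1 + i))%N; first by apply: eq_bigr => i _.
    by rewrite sum_ord_addn binS bin1 mulnS; ring.
  have := ps_bounded_prod (fun i : 'I_g => ps_bounded_derivn i (hf (s i))).
  by rewrite big_split /= prodr_const card_ord prodrXr sum_exponents sum_degrees.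
move=> m; apply: le_trans (normc_sum _ _ _) _.
apply: (@le_trans _ _ (\sum_(s : 'S_g) A ^+ g * 2%:R ^+ E * m.+1%:R ^+ N)).
  by apply: ler_sum => s _; rewrite normc_signM; exact: hterm.
by rewrite sumr_const card_Sn -[_ *+ g`!]mulr_natl !mulrA.
Qed.

End CoefficientBounds.

Theorem mainTheorem6 (R : realType) (g : nat) (A : R) (k : nat)
  (f : 'I_g -> pseries R) :
  (2 <= g)%N -> 1 <= A -> (1 <= k)%N ->
  (forall j : 'I_g, order_of_magnitude (f j) A k) ->
  order_of_magnitude (wronskian f)
    ((g`!)%:R * A ^+ g * 2%:R ^+ ((g * (g - 1) * (g + 3 * k - 2)) %/ 6))
    (g * k - 1 + (g * (g + 1)) %/ 2)%N.
Proof.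
move=> g_ge2 A_ge1 k_ge1 hf.
have gk_gt0 : (0 < g * k)%N by rewrite muln_gt0 k_ge1 (ltnW g_ge2).
have degree_closed : ((g * k + 'C(g.+1, 2)).-1 = g * k - 1 + (g * (g + 1)) %/ 2)%N.
  by rewrite bin2 -divn2 /= mulnC addn1; lia.
have := ps_bounded_wronskian (fun j => (hf j).2.2).
rewrite mul_bin2_add_bin3 degree_closed => hb.
split; first by rewrite !mulr_ege1 ?exprn_ege1 ?ler1n ?fact_gt0.
split; last exact: hb.
have gSg_ge2 : (2 <= g * (g + 1))%N by rewrite (leq_trans g_ge2) // leq_pmulr ?addn1.
by rewrite addn_gt0 divn_gt0 // gSg_ge2 orbT.
Qed.
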